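(* Let $n\ge 3$, let $k$ be an integer with $0\le k\le\frac n3$, and let $t\in\{0,\dots,n-1\}$. There is a function $f$, assigning a real number to every multiset of $n-k$ unlabelled graphs on $n-1$ vertices, such that for every graph $G$ on $n$ vertices and every sub-multiset $\mathcal{C}$ of $\mathcal{D}(G)$ of size $n-k$, $$\tfrac14 d_t(G)-1\le f(\mathcal{C})\le d_{t-1}(G)+d_t(G)+d_{t+1}(G),$$ where $d_{-1}(G)=d_n(G)=0$.
   Context: All graphs are finite, simple and undirected. For a graph $G'$ and integer $t$, $d_t(G')$ is the number of vertices of degree $t$ in $G'$. For $v\in V(G)$, the card $G-v$ is obtained by deleting $v$ and its incident edges; the deck $\mathcal{D}(G)$ is the multiset of the $n$ cards $G-v$, $v\in V(G)$, up to isomorphism. *)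

From mathcomp Require Import all_boot all_fingroup.
From Stdlib Require Import Reals.
Set Implicit Arguments. Unset Strict Implicit. Unset Printing Implicit Defensive.

Definition simple_graph (n : nat) (G : rel 'I_n) : Prop :=
  (forall x y, G x y = G y x) /\ (forall x, G x x = false).

Definition deg (n : nat) (G : rel 'I_n) (v : 'I_n) : nat := #|[pred u | G v u]|.
Definition dcount (n : nat) (G : rel 'I_n) (t : nat) : nat :=
  #|[pred v | deg G v == t]|.
Definition dcount_pred (n : nat) (G : rel 'I_n) (t : nat) : nat :=
  if t is t'.+1 then dcount G t' else 0.

(* The card G - v, relabelled on 'I_(n-1) by the order-preserving map
   x |-> bump v x (vertices below v keep their label, the others shift). *)
Definition deck_card (n : nat) (G : rel 'I_n) (v : 'I_n) : rel 'I_n.-1 :=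
  fun x y => G (insubd v (bump v x)) (insubd v (bump v y)).

Definition gr_iso (m : nat) (G1 G2 : rel 'I_m) : Prop :=
  exists p : {perm 'I_m}, forall x y, G1 x y = G2 (p x) (p y).

(* A function on sequences of labelled graphs that only depends on the
   multiset of isomorphism classes, i.e. a function on multisets of
   unlabelled graphs. *)
Definition multiset_iso_invariant (m : nat) (f : seq (rel 'I_m) -> R) : Prop :=
  forall s1 s2 : seq (rel 'I_m), forall (Hs : size s2 = size s1),
    (exists p : {perm 'I_(size s1)},
        forall i : 'I_(size s1),
          gr_iso (nth (fun _ _ => false) s1 i) (nth (fun _ _ => false) s2 (p i))) ->
    f s1 = f s2.

(* Removing v from G lowers by one exactly the degrees of the neighbours of v
   and leaves the other degrees unchanged.  Hence on every card G - v the
   vertices of degree t - 1 or t number at least d_t(G) - 1 (all vertices of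
   degree t in G except possibly v) and at most d_{t-1}(G) + d_t(G) + d_{t+1}(G).
   Taking f to be the maximum of this count over the cards of the multiset
   gives both bounds, even with d_t(G) - 1 in place of d_t(G)/4 - 1. *)
From mathcomp Require Import all_boot all_fingroup.
From Stdlib Require Import Reals.
From mathcomp Require Import zify.
From Stdlib Require Import Lra.
Set Implicit Arguments. Unset Strict Implicit.

Definition dcount_between (m : nat) (H : rel 'I_m) (a b : nat) : nat :=
  #|[pred v | a <= deg H v <= b]|.

Lemma dcount_between_diag m (H : rel 'I_m) a : dcount_between H a a = dcount H a.
Proof. by apply: eq_card => v; rewrite !inE -eqn_leq eq_sym. Qed.

Lemma dcount_between_addr m (H : rel 'I_m) a b : a <= b.+1 ->
  dcount_between H a b + dcount H b.+1 = dcount_between H a b.+1.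
Proof.
move=> le_ab; rewrite /dcount_between /dcount -cardUI.
rewrite (@eq_card0 _ [predI _ & _]) ?addn0; last by move=> v; rewrite !inE; lia.
by apply: eq_card => v; rewrite !inE; lia.
Qed.

Lemma dcount_pred_addE m (H : rel 'I_m) t :
  dcount_pred H t + dcount H t = dcount_between H t.-1 t.
Proof.
case: t => [|t] /=; first by rewrite dcount_between_diag.
by rewrite -dcount_between_diag dcount_between_addr.
Qed.

Lemma dcount_window3E m (H : rel 'I_m) t :
  dcount_pred H t + dcount H t + dcount H t.+1 = dcount_between H t.-1 t.+1.
Proof. by rewrite dcount_pred_addE dcount_between_addr //; lia. Qed.

Lemma card_perm_preim (T : finType) (p : {perm T}) (P : pred T) :
  #|[pred x | P (p x)]| = #|P|.
Proof.
transitivity #|p @^-1: [set x | P x]|; first by apply: eq_card => x; rewrite !inE.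
by rewrite card_preimset; [apply: eq_card => x; rewrite inE | exact: perm_inj].
Qed.

Lemma deg_iso m (H1 H2 : rel 'I_m) (p : {perm 'I_m}) :
  (forall x y, H1 x y = H2 (p x) (p y)) -> forall x, deg H1 x = deg H2 (p x).
Proof.
move=> H12 x; rewrite /deg -(card_perm_preim p [pred u | H2 (p x) u]); apply: eq_card => u.
by rewrite !inE H12.
Qed.

Lemma dcount_between_iso m (H1 H2 : rel 'I_m) a b :
  gr_iso H1 H2 -> dcount_between H1 a b = dcount_between H2 a b.
Proof.
case=> p H12; rewrite /dcount_between -(card_perm_preim p [pred v | a <= deg H2 v <= b]); apply: eq_card => v.
by rewrite !inE (deg_iso H12).
Qed.

Section DeckCard.

Variables (n : nat) (G : rel 'I_n.+1) (v : 'I_n.+1).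

Lemma deg_lift_deck_card x :
  deg G (lift v x) = G (lift v x) v + deg (deck_card G v) x.
Proof.
have insubd_bump (y : 'I_n) : insubd v (bump v y) = lift v y.
  by apply: val_inj; rewrite val_insubd /= (ltn_ord (lift v y)).
rewrite /deg -!sum1_card big_mkcond [in RHS]big_mkcond (bigD1_ord v) //=.
congr (_ + _).
by apply: eq_bigr => u _; rewrite !inE /deck_card !insubd_bump.
Qed.

Lemma dcount_between_deck_card a b :
  dcount_between (deck_card G v) a b <= dcount_between G a b.+1.
Proof.
rewrite /dcount_between -(card_image (@lift_inj _ v)); apply: subset_leq_card.
apply/subsetP => _ /imageP [x Hx ->]; move: Hx; rewrite !inE deg_lift_deck_card.
by case: (G _ v); lia.
Qed.

Lemma dcount_between_le_deck_card a b :
  dcount_between G a b <= 1 + dcount_between (deck_card G v) a.-1 b.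
Proof.
rewrite /dcount_between (cardD1 v) leq_add ?leq_b1 //.
rewrite -(card_image (@lift_inj _ v)); apply: subset_leq_card.
apply/subsetP => w; rewrite !inE; case: (unliftP v w) => [x ->|->]; last by rewrite eqxx.
move=> /andP [_]; rewrite deg_lift_deck_card => Hx.
apply/imageP; exists x => //; rewrite inE.
by move: Hx; case: (G _ v); lia.
Qed.

End DeckCard.

Definition max_dcount_between m (a b : nat) (s : seq (rel 'I_m)) : nat :=
  \max_(i < size s) dcount_between (nth (fun _ _ => false) s i) a b.

Lemma max_dcount_between_iso m a b :
  multiset_iso_invariant (fun s : seq (rel 'I_m) => INR (max_dcount_between a b s)).
Proof.
move=> s1 s2 Hs [p Hp]; congr INR; rewrite /max_dcount_between.
rewrite -!(big_mkord xpredT (fun i => dcount_between (nth _ _ i) a b)) Hs !big_mkord.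
rewrite [RHS](reindex_inj (@perm_inj _ p)) /=.
by apply: eq_bigr => i _; apply: dcount_between_iso.
Qed.

Theorem lemma5 (n k t : nat) :
  (3 <= n)%N -> (3 * k <= n)%N -> (t < n)%N ->
  exists f : seq (rel 'I_n.-1) -> R,
    multiset_iso_invariant f /\
    forall G : rel 'I_n, simple_graph G ->
    forall s : seq 'I_n, uniq s -> size s = (n - k)%N ->
      (/ 4 * INR (dcount G t) - 1 <= f (map (deck_card G) s)
       <= INR (dcount_pred G t + dcount G t + dcount G t.+1))%R.
Proof.
case: n => [//|n] n_ge3 k_le _.
exists (fun s => INR (max_dcount_between t.-1 t s)).
split; first exact: max_dcount_between_iso.
move=> G _ s _ size_s; set cards := map (deck_card G) s.
have cards_gt0 : 0 < size cards by rewrite size_map size_s; lia.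
have nth_cards (i : 'I_(size cards)) :
    nth (fun _ _ => false) cards i = deck_card G (nth ord0 s i).
  by apply: nth_map; rewrite -(size_map (deck_card G)).
have lower : dcount G t <= 1 + max_dcount_between t.-1 t cards.
  rewrite -dcount_between_diag.
  apply: leq_trans (dcount_between_le_deck_card G (nth ord0 s 0) t t) _.
  rewrite leq_add2l -(nth_cards (Ordinal cards_gt0)) /max_dcount_between.
  exact: (leq_bigmax (Ordinal cards_gt0)).
have upper : max_dcount_between t.-1 t cards <= dcount_between G t.-1 t.+1.
  apply/bigmax_leqP => i _; rewrite nth_cards.
  exact: dcount_between_deck_card.
rewrite dcount_window3E; split; last exact/le_INR/leP.
move/leP/le_INR: lower; rewrite plus_INR /=.
by have := pos_INR (dcount G t); lra.
Qed.
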